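(* Let $f:[0,1]\to\mathbb{R}^{+}$ be a decreasing function with continuous first and second derivatives. Let $a,b>0$ and define $t(x)=1-a(1-x)\dfrac{f(x)}{f(x)+b}$. If $f''(x)\bigl(f(x)+b\bigr)\ge 2\bigl(f'(x)\bigr)^2$ for all $x$, then $t$ is concave. *)

From Stdlib Require Import Reals Lra.
Open Scope R_scope.

Definition I01 (x : R) : Prop := 0 <= x <= 1.

(* g' is the derivative of g at x relative to the domain D (one-sided at
   boundary points of D, as for a function defined only on [0,1]). *)
Definition has_deriv_within (D : R -> Prop) (g g' : R -> R) (x : R) : Prop :=
  forall eps : R, 0 < eps -> exists delta : R, 0 < delta /\
    forall y : R, D y -> y <> x -> Rabs (y - x) < delta ->
      Rabs ((g y - g x) / (y - x) - g' x) < eps.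

Definition continuous_within (D : R -> Prop) (g : R -> R) (x : R) : Prop :=
  forall eps : R, 0 < eps -> exists delta : R, 0 < delta /\
    forall y : R, D y -> Rabs (y - x) < delta -> Rabs (g y - g x) < eps.

Definition concave_on (D : R -> Prop) (g : R -> R) : Prop :=
  forall x y l : R, D x -> D y -> 0 <= l <= 1 ->
    l * g x + (1 - l) * g y <= g (l * x + (1 - l) * y).

(** The derivative of [t] is [t' = a g - a b (1 - x) k] with [g = f / (f + b)] and
    [k = f' / (f + b)^2].  Since [f] decreases, [g] is nonincreasing and [k <= 0];
    moreover [k' = (f'' (f + b) - 2 f'^2) / (f + b)^3 >= 0] by hypothesis, so [k]
    is nondecreasing and hence so is [(1 - x) k].  Thus [t'] is nonincreasing on
    [(0,1)], [t] is concave there by the mean value theorem, and concavity passes to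
    [[0,1]] by continuity. *)

From Stdlib Require Import Reals Lra Psatz.
From Coquelicot Require Import Coquelicot.
Open Scope R_scope.

Lemma has_deriv_within_interior D g g' x r :
  0 < r -> (forall y, Rabs (y - x) < r -> D y) ->
  has_deriv_within D g g' x -> derivable_pt_lim g x (g' x).
Proof.
  intros r_pos near_D Hg eps eps_pos.
  destruct (Hg eps eps_pos) as [d [d_pos Hd]].
  assert (dr_pos : 0 < Rmin d r) by (apply Rmin_glb_lt; lra).
  exists (mkposreal _ dr_pos); simpl; intros h h_neq h_small.
  pose proof (Rmin_l d r); pose proof (Rmin_r d r).
  specialize (Hd (x + h)).
  replace (x + h - x) with h in Hd by ring.
  apply Hd; [apply near_D | |]; try (replace (x + h - x) with h by ring); lra.
Qed.

Lemma has_deriv_within_continuous D g g' x :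
  D x -> has_deriv_within D g g' x -> continuous_within D g x.
Proof.
  intros Dx Hg eps eps_pos.
  destruct (Hg 1 Rlt_0_1) as [d [d_pos Hd]].
  set (M := Rabs (g' x) + 1).
  assert (M_pos : 0 < M) by (unfold M; pose proof (Rabs_pos (g' x)); lra).
  assert (eM_pos : 0 < eps / M) by (apply Rdiv_lt_0_compat; lra).
  exists (Rmin d (eps / M)); split; [now apply Rmin_glb_lt|].
  intros y Dy y_near.
  pose proof (Rmin_l d (eps / M)); pose proof (Rmin_r d (eps / M)).
  destruct (Req_dec y x) as [->|y_neq].
  { unfold Rminus; rewrite Rplus_opp_r, Rabs_R0; lra. }
  specialize (Hd y Dy y_neq ltac:(lra)).
  assert (slope_bound : Rabs ((g y - g x) / (y - x)) < M).
  { pose proof (Rabs_triang ((g y - g x) / (y - x) - g' x) (g' x)).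
    replace ((g y - g x) / (y - x) - g' x + g' x) with ((g y - g x) / (y - x))
      in * by ring.
    unfold M; lra. }
  replace (g y - g x) with ((g y - g x) / (y - x) * (y - x)) by (field; lra).
  rewrite Rabs_mult.
  assert (eps / M * M = eps) by (field; lra).
  pose proof (Rabs_pos ((g y - g x) / (y - x))); pose proof (Rabs_pos (y - x)).
  nra.
Qed.

Lemma continuous_within_limit1_in D g x :
  continuous_within D g x <-> limit1_in g D (g x) x.
Proof.
  split; intros Hg eps eps_pos; destruct (Hg eps eps_pos) as [d [d_pos Hd]];
    exists d; (split; [lra|]).
  - intros y [Dy y_near]; exact (Hd y Dy y_near).
  - intros y Dy y_near; exact (Hd y (conj Dy y_near)).
Qed.

Lemma continuous_within_t D f a b x :
  continuous_within D f x -> f x + b <> 0 ->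
  continuous_within D (fun y => 1 - a * (1 - y) * (f y / (f y + b))) x.
Proof.
  intros Hf denom_neq0; apply continuous_within_limit1_in.
  apply continuous_within_limit1_in in Hf.
  assert (cst : forall c, limit1_in (fun _ => c) D c x) by (intro c; exact (limit_free (fun _ => c) D x x)).
  assert (id : limit1_in (fun y => y) D x x) by (intros e e_pos; exists e; now split).
  apply limit_minus; [apply cst|].
  apply limit_mul; [apply limit_mul; [apply cst | now apply limit_minus]|].
  apply limit_mul; [exact Hf|].
  apply limit_inv; [now apply limit_plus | exact denom_neq0].
Qed.

Lemma derive_nonpos_of_nonincreasing g x v l :
  x < v -> (forall y, x < y < v -> g y <= g x) -> derivable_pt_lim g x l -> l <= 0.
Proof.
  intros x_lt_v g_dec Hg.
  destruct (Rle_or_lt l 0) as [|l_pos]; [assumption|exfalso].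
  destruct (Hg l l_pos) as [[d d_pos] Hd]; simpl in Hd.
  set (h := Rmin (d / 2) ((v - x) / 2)).
  pose proof (Rmin_l (d / 2) ((v - x) / 2)) as h_le_d; pose proof (Rmin_r (d / 2) ((v - x) / 2)) as h_le_v.
  fold h in h_le_d, h_le_v.
  assert (h_pos : 0 < h) by (apply Rmin_glb_lt; lra).
  specialize (Hd h ltac:(lra) ltac:(rewrite Rabs_right; lra)).
  assert (quot_nonpos : (g (x + h) - g x) / h <= 0).
  { assert (g (x + h) <= g x) by (apply g_dec; lra).
    unfold Rdiv; pose proof (Rinv_0_lt_compat h h_pos); nra. }
  apply Rabs_def2 in Hd; lra.
Qed.

Lemma nondecreasing_of_derive_nonneg g g' u v :
  (forall x, u < x < v -> derivable_pt_lim g x (g' x)) ->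
  (forall x, u < x < v -> 0 <= g' x) ->
  forall x y, u < x -> x <= y -> y < v -> g x <= g y.
Proof.
  intros Hg g'_nonneg x y ux [x_lt_y| ->] yv; [|lra].
  destruct (MVT_cor2 g g' x y x_lt_y) as [c [mvt c_in]].
  { intros c c_in; apply Hg; lra. }
  assert (0 <= g' c) by (apply g'_nonneg; lra).
  nra.
Qed.

Lemma concave_of_derive_nonincreasing T T' u v :
  (forall x, u < x < v -> derivable_pt_lim T x (T' x)) ->
  (forall x y, u < x -> x <= y -> y < v -> T' y <= T' x) ->
  forall x y l, u < x < v -> u < y < v -> 0 <= l <= 1 ->
    l * T x + (1 - l) * T y <= T (l * x + (1 - l) * y).
Proof.
  intros HT T'_dec.
  assert (ordered : forall x y l, u < x -> x < y -> y < v -> 0 < l < 1 ->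
     l * T x + (1 - l) * T y <= T (l * x + (1 - l) * y)).
  { intros x y l ux x_lt_y yv l_in.
    set (z := l * x + (1 - l) * y).
    assert (x < z < y) by (unfold z; split; nra).
    destruct (MVT_cor2 T T' x z) as [c1 [mvt1 c1_in]]; [lra| intros; apply HT; lra |].
    destruct (MVT_cor2 T T' z y) as [c2 [mvt2 c2_in]]; [lra| intros; apply HT; lra |].
    assert (T' c2 <= T' c1) by (apply T'_dec; lra).
    assert (l * T x + (1 - l) * T y - T z = l * (1 - l) * (y - x) * (T' c2 - T' c1)).
    { replace (l * T x + (1 - l) * T y - T z)
        with (- l * (T z - T x) + (1 - l) * (T y - T z)) by ring.
      rewrite mvt1, mvt2; unfold z; ring. }
    assert (0 <= l * (1 - l) * (y - x)) by (apply Rmult_le_pos; nra).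
    nra. }
  intros x y l x_in y_in l_in.
  destruct (Req_dec l 0) as [->|l_neq0].
  { replace (0 * x + (1 - 0) * y) with y by ring; lra. }
  destruct (Req_dec l 1) as [->|l_neq1].
  { replace (1 * x + (1 - 1) * y) with x by ring; lra. }
  destruct (Rtotal_order x y) as [x_lt_y|[<-|y_lt_x]].
  - apply ordered; lra.
  - replace (l * x + (1 - l) * x) with x by ring; lra.
  - pose proof (ordered y x (1 - l) ltac:(lra) y_lt_x ltac:(lra) ltac:(lra)) as H.
    replace (1 - (1 - l)) with l in H by ring.
    replace ((1 - l) * y + l * x) with (l * x + (1 - l) * y) in H by ring; lra.
Qed.

Lemma concave_on_I01_of_interior T :
  (forall x y l, 0 < x < 1 -> 0 < y < 1 -> 0 <= l <= 1 ->
    l * T x + (1 - l) * T y <= T (l * x + (1 - l) * y)) ->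
  (forall x, I01 x -> continuous_within I01 T x) -> concave_on I01 T.
Proof.
  intros T_concave T_cont x y l x_in y_in l_in; unfold I01 in *.
  set (z := l * x + (1 - l) * y).
  assert (z_in : I01 z) by (unfold I01, z; nra).
  destruct (Rle_or_lt (l * T x + (1 - l) * T y) (T z)) as [|gap]; [assumption|exfalso].
  set (eps := (l * T x + (1 - l) * T y - T z) / 3).
  assert (eps_pos : 0 < eps) by (unfold eps; lra).
  destruct (T_cont x x_in eps eps_pos) as [d1 [d1_pos C1]].
  destruct (T_cont y y_in eps eps_pos) as [d2 [d2_pos C2]].
  destruct (T_cont z z_in eps eps_pos) as [d3 [d3_pos C3]].
  set (e := Rmin (1 / 2) (Rmin d1 (Rmin d2 d3))).
  assert (e_pos : 0 < e) by (unfold e; repeat apply Rmin_glb_lt; lra).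
  assert (e <= 1 / 2 /\ e <= d1 /\ e <= d2 /\ e <= d3) as (e_le & e_d1 & e_d2 & e_d3).
  { unfold e; pose proof (Rmin_l (1 / 2) (Rmin d1 (Rmin d2 d3))).
    pose proof (Rmin_r (1 / 2) (Rmin d1 (Rmin d2 d3))).
    pose proof (Rmin_l d1 (Rmin d2 d3)); pose proof (Rmin_r d1 (Rmin d2 d3)).
    pose proof (Rmin_l d2 d3); pose proof (Rmin_r d2 d3). lra. }
  (* an affine map that pushes [0,1] into (0,1), moves points by less than e,
     and commutes with convex combinations *)
  set (shrink := fun s => (1 - e) * s + e / 2).
  assert (shrink_in : forall s, 0 <= s <= 1 -> 0 < shrink s < 1)
    by (intros s Hs; unfold shrink; nra).
  assert (shrink_near : forall s, 0 <= s <= 1 -> Rabs (shrink s - s) < e)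
    by (intros s Hs; unfold shrink; apply Rabs_def1; nra).
  assert (l * shrink x + (1 - l) * shrink y = shrink z) as shrink_z
    by (unfold shrink, z; ring).
  pose proof (T_concave _ _ l (shrink_in x x_in) (shrink_in y y_in) l_in) as Hs.
  rewrite shrink_z in Hs.
  assert (near : forall s d, 0 <= s <= 1 -> e <= d -> I01 (shrink s) /\ Rabs (shrink s - s) < d).
  { intros s d s_in e_d; pose proof (shrink_in s s_in); pose proof (shrink_near s s_in).
    unfold I01; split; lra. }
  destruct (near x d1 x_in e_d1) as [I1 N1].
  destruct (near y d2 y_in e_d2) as [I2 N2].
  destruct (near z d3 z_in e_d3) as [I3 N3].
  pose proof (Rabs_def2 _ _ (C1 _ I1 N1)); pose proof (Rabs_def2 _ _ (C2 _ I2 N2)).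
  pose proof (Rabs_def2 _ _ (C3 _ I3 N3)).
  unfold eps in *; nra.
Qed.

Lemma is_derive_t (f f1 : R -> R) a b x :
  is_derive f x (f1 x) -> 0 < f x + b ->
  is_derive (fun y => 1 - a * (1 - y) * (f y / (f y + b))) x
    (a * (f x / (f x + b)) - a * b * (1 - x) * (f1 x / (f x + b) ^ 2)).
Proof.
  intros Hf denom_pos; auto_derive.
  - repeat split; try (eexists; eassumption); lra.
  - replace (Derive _ x) with (f1 x) by (symmetry; now apply is_derive_unique).
    field; lra.
Qed.

Lemma is_derive_k (f f1 f2 : R -> R) b x :
  is_derive f x (f1 x) -> is_derive f1 x (f2 x) -> 0 < f x + b ->
  is_derive (fun y => f1 y / (f y + b) ^ 2) x
    ((f2 x * (f x + b) - 2 * f1 x ^ 2) / (f x + b) ^ 3).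
Proof.
  intros Hf Hf1 denom_pos; auto_derive.
  - repeat split; try (eexists; eassumption).
    rewrite Rmult_1_r; apply Rmult_integral_contrapositive_currified; lra.
  - replace (Derive (fun y => f y) x) with (f1 x) by (symmetry; now apply is_derive_unique).
    replace (Derive (fun y => f1 y) x) with (f2 x) by (symmetry; now apply is_derive_unique).
    field; lra.
Qed.

Section ConcaveTransform.

Variables (f f1 f2 : R -> R) (a b : R).
Hypothesis f_pos : forall x, 0 < x < 1 -> 0 < f x.
Hypothesis f_nonincreasing : forall x y, 0 < x -> x <= y -> y < 1 -> f y <= f x.
Hypothesis f_derive : forall x, 0 < x < 1 -> is_derive f x (f1 x).
Hypothesis f1_derive : forall x, 0 < x < 1 -> is_derive f1 x (f2 x).
Hypothesis a_pos : 0 < a.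
Hypothesis b_pos : 0 < b.
Hypothesis f2_ineq : forall x, 0 < x < 1 -> 2 * f1 x ^ 2 <= f2 x * (f x + b).

Lemma f1_nonpos x : 0 < x < 1 -> f1 x <= 0.
Proof.
  intros x_in; apply (derive_nonpos_of_nonincreasing f x 1); [lra| |].
  - intros y y_in; apply f_nonincreasing; lra.
  - now apply is_derive_Reals, f_derive.
Qed.

Lemma ratio_nonincreasing x y :
  0 < x -> x <= y -> y < 1 -> f y / (f y + b) <= f x / (f x + b).
Proof.
  intros x_pos x_le_y y_lt1.
  assert (f y <= f x) by now apply f_nonincreasing.
  assert (0 < f x) by (apply f_pos; lra); assert (0 < f y) by (apply f_pos; lra).
  assert (f x / (f x + b) - f y / (f y + b) = b * (f x - f y) / ((f x + b) * (f y + b)))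
    by (field; lra).
  enough (0 <= b * (f x - f y) / ((f x + b) * (f y + b))) by lra.
  apply Rdiv_le_0_compat; nra.
Qed.

Lemma k_nondecreasing x y :
  0 < x -> x <= y -> y < 1 -> f1 x / (f x + b) ^ 2 <= f1 y / (f y + b) ^ 2.
Proof.
  apply (nondecreasing_of_derive_nonneg (fun z => f1 z / (f z + b) ^ 2)
    (fun z => (f2 z * (f z + b) - 2 * f1 z ^ 2) / (f z + b) ^ 3)).
  - intros z z_in; apply is_derive_Reals, is_derive_k; auto.
    pose proof (f_pos z z_in); lra.
  - intros z z_in; pose proof (f_pos z z_in); pose proof (f2_ineq z z_in).
    apply Rdiv_le_0_compat; [lra | apply pow_lt; lra].
Qed.

Lemma t_concave_interior x y l :
  0 < x < 1 -> 0 < y < 1 -> 0 <= l <= 1 ->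
  let t z := 1 - a * (1 - z) * (f z / (f z + b)) in
  l * t x + (1 - l) * t y <= t (l * x + (1 - l) * y).
Proof.
  intros x_in y_in l_in.
  apply (concave_of_derive_nonincreasing _
    (fun z => a * (f z / (f z + b)) - a * b * (1 - z) * (f1 z / (f z + b) ^ 2)) 0 1);
    [| | assumption..].
  - intros z z_in; apply is_derive_Reals, is_derive_t; auto.
    pose proof (f_pos z z_in); lra.
  - intros u v u_pos u_le_v v_lt1.
    pose proof (ratio_nonincreasing u v u_pos u_le_v v_lt1).
    pose proof (k_nondecreasing u v u_pos u_le_v v_lt1).
    assert (f1 v / (f v + b) ^ 2 <= 0).
    { pose proof (f1_nonpos v ltac:(lra)); pose proof (f_pos v ltac:(lra)).
      pose proof (Rinv_0_lt_compat _ (pow_lt (f v + b) 2 ltac:(lra))).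
      unfold Rdiv; nra. }
    assert ((1 - u) * (f1 u / (f u + b) ^ 2) <= (1 - v) * (f1 v / (f v + b) ^ 2)) by nra.
    assert (0 <= a * b) by nra.
    nra.
Qed.

End ConcaveTransform.

Theorem proposition2 (f f1 f2 : R -> R) (a b : R) :
  (* f : [0,1] -> R^+ *)
  (forall x, I01 x -> 0 < f x) ->
  (* f is decreasing on [0,1] *)
  (forall x y, I01 x -> I01 y -> x <= y -> f y <= f x) ->
  (* f has continuous first and second derivatives f1 = f', f2 = f'' on [0,1] *)
  (forall x, I01 x -> has_deriv_within I01 f f1 x) ->
  (forall x, I01 x -> has_deriv_within I01 f1 f2 x) ->
  (forall x, I01 x -> continuous_within I01 f1 x) ->
  (forall x, I01 x -> continuous_within I01 f2 x) ->
  0 < a -> 0 < b ->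
  (forall x, I01 x -> f2 x * (f x + b) >= 2 * (f1 x) ^ 2) ->
  concave_on I01 (fun x => 1 - a * (1 - x) * (f x / (f x + b))).
Proof.
  intros f_pos f_dec f_deriv f1_deriv _ _ a_pos b_pos f2_ineq.
  assert (interior_derive : forall g g', (forall x, I01 x -> has_deriv_within I01 g g' x) ->
            forall x, 0 < x < 1 -> is_derive g x (g' x)).
  { intros g g' Hg x x_in; apply is_derive_Reals.
    apply (has_deriv_within_interior I01 _ _ _ (Rmin x (1 - x))).
    - apply Rmin_glb_lt; lra.
    - intros y y_near; pose proof (Rmin_l x (1 - x)); pose proof (Rmin_r x (1 - x)).
      apply Rabs_def2 in y_near; unfold I01; lra.
    - apply Hg; unfold I01; lra. }
  apply concave_on_I01_of_interior.
  - intros x y l x_in y_in l_in.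
    apply (t_concave_interior f f1 f2 a b); try assumption.
    + intros z z_in; apply f_pos; unfold I01; lra.
    + intros u v u_pos u_le_v v_lt1; apply f_dec; unfold I01; lra.
    + now apply interior_derive.
    + now apply interior_derive.
    + intros z z_in; apply Rge_le, f2_ineq; unfold I01; lra.
  - intros x x_in; apply continuous_within_t.
    + now apply (has_deriv_within_continuous _ _ f1), f_deriv.
    + pose proof (f_pos x x_in); lra.
Qed.
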